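(* Let $\mathbf{s}, \mathbf{n} \in \mathbb{R}^T$, let $\mathbf{y} = \mathbf{s} + \mathbf{n}$, and let $\widehat{\mathbf{s}} \in \mathbb{R}^T$ be any vector (the enhanced signal). Let $\omega_{\text{obs}} > 0$ and set $\overline{\mathbf{s}} = \widehat{\mathbf{s}} + \omega_{\text{obs}}\mathbf{y}$. Assume $\mathbf{P}_{\mathbf{s},\mathbf{n}}\widehat{\mathbf{s}} \neq \mathbf{0}$ and $\widehat{\mathbf{s}} - \mathbf{P}_{\mathbf{s},\mathbf{n}}\widehat{\mathbf{s}} \neq \mathbf{0}$. If $\langle \widehat{\mathbf{s}}, \mathbf{y} \rangle > 0$, then $\mathrm{SAR}(\overline{\mathbf{s}}) > \mathrm{SAR}(\widehat{\mathbf{s}})$.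
   Context: Fix an integer $L \ge 1$. For a vector $\mathbf{x} \in \mathbb{R}^T$ and $0 \le \tau \le L-1$, let $\mathbf{x}^{\tau}$ denote $\mathbf{x}$ delayed by $\tau$ samples, i.e. $(\mathbf{x}^{\tau})_t = x_{t-\tau}$ for $t > \tau$ and $0$ otherwise. Let $\mathbf{A}_{\mathbf{s},\mathbf{n}} = [\mathbf{s}^{0},\dots,\mathbf{s}^{L-1},\mathbf{n}^{0},\dots,\mathbf{n}^{L-1}] \in \mathbb{R}^{T\times 2L}$, assumed to have full column rank, and let $\mathbf{P}_{\mathbf{s},\mathbf{n}} = \mathbf{A}_{\mathbf{s},\mathbf{n}}(\mathbf{A}_{\mathbf{s},\mathbf{n}}^{\mathsf T}\mathbf{A}_{\mathbf{s},\mathbf{n}})^{-1}\mathbf{A}_{\mathbf{s},\mathbf{n}}^{\mathsf T}$ be the orthogonal projection onto the span of these delayed signals. For an estimate $\mathbf{z} \in \mathbb{R}^T$, define the artifact error $\mathbf{e}_{\text{artif}}(\mathbf{z}) = \mathbf{z} - \mathbf{P}_{\mathbf{s},\mathbf{n}}\mathbf{z}$ and the signal-to-artifact ratio $\mathrm{SAR}(\mathbf{z}) = 10\log_{10}\frac{\|\mathbf{P}_{\mathbf{s},\mathbf{n}}\mathbf{z}\|^2}{\|\mathbf{e}_{\text{artif}}(\mathbf{z})\|^2}$ (equivalently $\|\mathbf{s}_{\text{target}}+\mathbf{e}_{\text{noise}}\|^2/\|\mathbf{e}_{\text{artif}}\|^2$ in the decomposition $\mathbf{z} = \mathbf{P}_{\mathbf{s}}\mathbf{z}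 + (\mathbf{P}_{\mathbf{s},\mathbf{n}}-\mathbf{P}_{\mathbf{s}})\mathbf{z} + \mathbf{e}_{\text{artif}}(\mathbf{z})$). Here $\langle\cdot,\cdot\rangle$ is the Euclidean inner product. *)

From mathcomp Require Import all_boot all_order all_algebra.
From mathcomp Require Import reals exp.
Set Implicit Arguments. Unset Strict Implicit. Unset Printing Implicit Defensive.
Import Order.TTheory GRing.Theory Num.Theory.
Local Open Scope ring_scope.

Section Defs.
Variables (R : realType) (T L : nat).

(* delayed signal x^tau, 0-indexed: (x^tau)_t = x_(t - tau) if tau <= t, else 0.
   Written as the sum over the (at most one) index u with u + tau = t. *)
Definition delay (x : 'cV[R]_T) (tau : nat) : 'cV[R]_T :=
  \col_(t < T) \sum_(u < T | (u + tau == t)%N) x u 0.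

Definition delay_mx (x : 'cV[R]_T) : 'M[R]_(T, L) :=
  \matrix_(t < T, k < L) delay x k t 0.

Definition A_sn (s n : 'cV[R]_T) : 'M[R]_(T, L + L) :=
  row_mx (delay_mx s) (delay_mx n).

Definition P_sn (s n : 'cV[R]_T) : 'M[R]_T :=
  let A := A_sn s n in A *m invmx (A^T *m A) *m A^T.

Definition inner (x y : 'cV[R]_T) : R := (x^T *m y) 0 0.
Definition sqnorm (x : 'cV[R]_T) : R := inner x x.

Definition e_artif (s n z : 'cV[R]_T) : 'cV[R]_T := z - P_sn s n *m z.

Definition log10 (x : R) : R := ln x / ln 10.

Definition SAR (s n z : 'cV[R]_T) : R :=
  10 * log10 (sqnorm (P_sn s n *m z) / sqnorm (e_artif s n z)).
End Defs.

From mathcomp Require Import all_boot all_order all_algebra.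
From mathcomp Require Import reals exp ring lra.
Import Order.TTheory GRing.Theory Num.Theory.
Local Open Scope ring_scope.

(* The observation y = s + n is the sum of the two undelayed columns of A_{s,n},
   so P y = y. Hence adding w y moves only the projected part: the artifact error
   is unchanged, while |P z + w y|^2 = |P z|^2 + 2 w <z, y> + w^2 |y|^2 grows
   because <P z, y> = <z, P y> = <z, y> > 0. *)

Section InnerProduct.
Context {R : realType} {T : nat}.
Implicit Types (x y : 'cV[R]_T) (a : R).

Lemma sqnorm_ge0 x : 0 <= sqnorm x.
Proof.
by rewrite /sqnorm /inner mxE; apply: sumr_ge0 => i _; rewrite mxE -expr2 sqr_ge0.
Qed.

Lemma sqnorm_eq0 x : (sqnorm x == 0) = (x == 0).
Proof.
apply/idP/eqP => [|->]; last by rewrite /sqnorm /inner mulmx0 mxE.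
rewrite /sqnorm /inner mxE psumr_eq0 => [/allP x0|i _]; last first.
  by rewrite mxE -expr2 sqr_ge0.
apply/matrixP => i j; rewrite (ord1 j) mxE.
by have := x0 i (mem_index_enum _); rewrite mxE mulf_eq0 orbb => /eqP.
Qed.

Lemma sqnorm_gt0 x : (0 < sqnorm x) = (x != 0).
Proof. by rewrite lt_def sqnorm_ge0 sqnorm_eq0 andbT. Qed.

Lemma innerC x y : inner x y = inner y x.
Proof. by rewrite /inner -[x^T *m y]trmxK trmx_mul trmxK mxE. Qed.

Lemma inner_mull (M : 'M[R]_T) x y : inner (M *m x) y = inner x (M^T *m y).
Proof. by rewrite /inner trmx_mul mulmxA. Qed.

Lemma sqnormDZ x a y :
  sqnorm (x + a *: y) = sqnorm x + 2 * a * inner x y + a ^+ 2 * sqnorm y.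
Proof.
move: (innerC y x).
rewrite /sqnorm /inner !mulmxDr linearD linearZ /= !mulmxDl.
by rewrite -!scalemxAl -!scalemxAr !mxE => ->; ring.
Qed.

End InnerProduct.

Section Projection.
Context {R : realType} {T k : nat}.
Variable A : 'M[R]_(T, k).

Definition proj_mx : 'M[R]_T := A *m invmx (A^T *m A) *m A^T.

Lemma proj_mx_tr : proj_mx^T = proj_mx.
Proof. by rewrite !trmx_mul trmx_inv trmx_mul !trmxK mulmxA. Qed.

Hypothesis rankA : \rank A = k.

(* A column v with A^T A v = 0 has |A v|^2 = v^T A^T A v = 0, so A v = 0 and v = 0. *)
Lemma gram_unitmx : A^T *m A \in unitmx.
Proof.
rewrite -row_free_unit; apply: inj_row_free => v vAA0.
have /eqP : sqnorm (A *m v^T) = 0.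
  by rewrite /sqnorm /inner trmx_mul trmxK mulmxA -(mulmxA v) vAA0 !mul0mx mxE.
rewrite sqnorm_eq0 => /eqP Av0.
have freeAt : row_free A^T by rewrite /row_free mxrank_tr rankA.
by apply: (row_free_inj freeAt); rewrite mul0mx -[v]trmxK -trmx_mul Av0 trmx0.
Qed.

Lemma proj_mx_span : proj_mx *m A = A.
Proof. by rewrite /proj_mx -!mulmxA mulVmx ?gram_unitmx // mulmx1. Qed.

End Projection.

Section Delay.
Context {R : realType} {T L : nat}.

Lemma delay0 (x : 'cV[R]_T) : delay x 0 = x.
Proof.
apply/matrixP => t j; rewrite (ord1 j) mxE (eq_bigl (pred1 t)) ?big_pred1_eq //.
by move=> u /=; rewrite addn0.
Qed.

Lemma delay_mx_col0 (L_gt0 : (0 < L)%N) (x : 'cV[R]_T) :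
  delay_mx L x *m delta_mx (Ordinal L_gt0) 0 = x.
Proof.
rewrite -colE; apply/matrixP => t j; rewrite (ord1 j) !mxE /=.
by rewrite -[in RHS](delay0 x) mxE.
Qed.

Lemma A_sn_col0 (L_gt0 : (0 < L)%N) (s n : 'cV[R]_T) :
  let e := delta_mx (Ordinal L_gt0) 0 in A_sn L s n *m col_mx e e = s + n.
Proof. by rewrite /A_sn mul_row_col !delay_mx_col0. Qed.

End Delay.

Lemma ltr_log10 (R : realType) (x y : R) :
  0 < x -> x < y -> log10 x < log10 y.
Proof.
move=> x_gt0 xy; have y_gt0 : 0 < y by apply: lt_trans xy.
rewrite /log10 ltr_pM2r ?invr_gt0 ?ln_gt0 ?(ltr_nat R 1 10) //.
by rewrite ltr_ln ?posrE.
Qed.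

Theorem proposition1 (R : realType) (T L : nat) (hL : (1 <= L)%N)
  (s n shat : 'cV[R]_T) (w_obs : R)
  (hrank : \rank (A_sn L s n) = (L + L)%N)
  (hw : 0 < w_obs)
  (hP : P_sn L s n *m shat != 0)
  (hE : e_artif L s n shat != 0)
  (hpos : 0 < inner shat (s + n)) :
  SAR L s n (shat + w_obs *: (s + n)) > SAR L s n shat.
Proof.
have Py : P_sn L s n *m (s + n) = s + n.
  by rewrite -(A_sn_col0 hL) mulmxA [P_sn _ _ _]/(proj_mx _) proj_mx_span.
have PzD : P_sn L s n *m (shat + w_obs *: (s + n))
         = P_sn L s n *m shat + w_obs *: (s + n).
  by rewrite mulmxDr -scalemxAr Py.
have artif_eq : e_artif L s n (shat + w_obs *: (s + n)) = e_artif L s n shat.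
  by rewrite /e_artif PzD opprD addrACA subrr addr0.
have Pzy : inner (P_sn L s n *m shat) (s + n) = inner shat (s + n).
  by rewrite inner_mull [_^T]proj_mx_tr Py.
rewrite /SAR artif_eq PzD ltr_pM2l //; apply: ltr_log10.
  by rewrite divr_gt0 ?sqnorm_gt0.
rewrite ltr_pM2r ?invr_gt0 ?sqnorm_gt0 // sqnormDZ Pzy.
have : 0 < w_obs * inner shat (s + n) by rewrite mulr_gt0.
have : 0 <= w_obs ^+ 2 * sqnorm (s + n) by rewrite mulr_ge0 ?sqr_ge0 ?sqnorm_ge0.
lra.
Qed.
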